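(* Let $T\in\mathbb{R}^{M\times M}$ be symmetric positive definite, $D\in\mathbb{R}^{M\times M}$ diagonal with nonpositive diagonal entries, and $\omega>0$. Then every eigenvalue of $\mathcal{F}_\omega^{-1}\mathcal{R}$ lies in the closed disk in $\mathbb{C}$ of radius $\sigma(\omega)$ centered at $1$, where $$\sigma(\omega)=\max_{\lambda_i\in\lambda(D)}\left|\frac{\omega+\lambda_i}{\omega-\lambda_i}\right|\cdot\max_{\mu_i\in\lambda(T)}\sqrt{\frac{(\omega-\mu_i)^2+1}{(\omega+\mu_i)^2+1}}<1 .$$
   Context: Let $I$ denote the identity matrix of the appropriate size. Define the $2M\times 2M$ real block matrices $$\mathcal{R}=\begin{bmatrix}T-D & -I\\ I & T-D\end{bmatrix},\quad \mathcal{B}=\begin{bmatrix}-D&0\\0&-D\end{bmatrix},\quad \mathcal{H}=\begin{bmatrix}T&-I\\ I&T\end{bmatrix},$$ and for $\omega>0$, $\mathcal{F}_\omega=\tfrac{1}{2\omega}(\omega I+\mathcal{B})(\omega I+\mathcal{H})$. $\lambda(D)$, $\lambda(T)$ denote the sets of eigenvalues of $D$, $T$. *)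

From mathcomp Require Import all_boot all_algebra.
From mathcomp Require Import complex.
From mathcomp Require Import classical_sets reals.
Set Implicit Arguments. Unset Strict Implicit. Unset Printing Implicit Defensive.
Import GRing.Theory Num.Theory.
Local Open Scope ring_scope.
Local Open Scope classical_set_scope.

Section Defs.
Variable R : realType.
Variable M : nat.

Definition spd (T : 'M[R]_M) : Prop :=
  T^T = T /\ forall v : 'cV[R]_M, v != 0 -> 0 < (v^T *m T *m v) 0 0.

Definition Rmx (T D : 'M[R]_M) : 'M[R]_(M + M) :=
  block_mx (T - D) (- 1%:M) 1%:M (T - D).
Definition Bmx (D : 'M[R]_M) : 'M[R]_(M + M) :=
  block_mx (- D) 0 0 (- D).
Definition Hmx (T : 'M[R]_M) : 'M[R]_(M + M) :=
  block_mx T (- 1%:M) 1%:M T.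
Definition Fmx (w : R) (T D : 'M[R]_M) : 'M[R]_(M + M) :=
  (2 * w)^-1 *: ((w%:M + Bmx D) *m (w%:M + Hmx T)).

Definition spec (A : 'M[R]_M) : set R := [set a | eigenvalue A a].

(* sigma(omega) = max over lambda(D) * max over lambda(T); maxima over the
   finite sets of eigenvalues are expressed as suprema *)
Definition sigma (w : R) (T D : 'M[R]_M) : R :=
  sup [set `|(w + l) / (w - l)| | l in spec D] *
  sup [set Num.sqrt (((w - m) ^+ 2 + 1) / ((w + m) ^+ 2 + 1)) | m in spec T].

End Defs.

Definition toC (R : realType) (x : R) : R[i] := (x%:C)%C.

(* Since F = (2w)^-1 (w + B)(w + H) and R = B + H, the difference F - R equals
   (2w)^-1 (w - B)(w - H).  Hence if v is a left eigenvector of F^-1 R for z and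
   u = v F^-1, then u (w - B)(w - H) = (1 - z) u (w + B)(w + H).  As w - H and
   w + H commute, y := u (w + B) and h := u (w - B) (w + H)^-1 satisfy
   (1 - z) y = h (w - H), so |1 - z| <= a b whenever
   |v (w - B)| <= a |v (w + B)| and |v (w - H)| <= b |v (w + H)| for all v.
   Both B and H have the shape [[X, -cI], [cI, X]] with X symmetric, for which
   |v (w +- K)|^2 splits as a sum of |v_i (w +- X)|^2 + c^2 |v_i|^2; diagonalizing X
   reduces the two estimates to the scalar ones |w + d| <= a |w - d| on lambda(D)
   (c = 0) and (w - m)^2 + 1 <= b^2 ((w + m)^2 + 1) on lambda(T) (c = 1), with
   b < 1 because the eigenvalues m of T are positive. *)

From mathcomp Require Import all_boot all_order all_algebra.
From mathcomp Require Import complex.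
From mathcomp Require Import classical_sets boolp reals.
From mathcomp Require Import ring lra.
Import Order.TTheory GRing.Theory Num.Theory.
Local Open Scope ring_scope.
Local Open Scope sesquilinear_scope.
Set Implicit Arguments. Unset Strict Implicit. Unset Printing Implicit Defensive.

Lemma eigenvalue_diag_mx (F : fieldType) n (d : 'rV[F]_n) a :
  eigenvalue (diag_mx d) a = (a \in codom (d 0)).
Proof.
rewrite eigenvalue_root_char char_poly_trig ?diag_mx_is_trig //.
rewrite (eq_bigr (fun j => 'X - (d 0 j)%:P)) => [|j _]; last by rewrite mxE eqxx.
by rewrite -(big_map (d 0) xpredT (fun b => 'X - b%:P)) root_prod_XsubC codomE enumT.
Qed.

Lemma eigenvalue_uconj (F : fieldType) n (P A : 'M[F]_n) a : P \in unitmx ->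
  eigenvalue (invmx P *m A *m P) a = eigenvalue A a.
Proof.
move=> Pu; apply/eigenvalueP/eigenvalueP => -[v hv v0].
  exists (v *m invmx P); last by rewrite mulmx_free_eq0 ?row_free_unit ?unitmx_inv.
  by rewrite scalemxAl -hv !mulmxA mulmxK.
exists (v *m P); last by rewrite mulmx_free_eq0 ?row_free_unit.
by rewrite scalemxAl -hv !mulmxA mulmxK.
Qed.

Definition skew_block (R : pzRingType) n (X : 'M[R]_n) (c : R) : 'M[R]_(n + n) :=
  block_mx X (- c%:M) c%:M X.

Lemma add_scalar_skew_block (R : pzRingType) n (X : 'M[R]_n) (a c : R) :
  a%:M + skew_block X c = skew_block (a%:M + X) c.
Proof. by rewrite scalar_mx_block add_block_mx sub0r add0r. Qed.

Lemma opp_skew_block (R : pzRingType) n (X : 'M[R]_n) (c : R) :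
  - skew_block X c = skew_block (- X) (- c).
Proof. by rewrite /skew_block opp_block_mx !raddfN. Qed.

Lemma map_skew_block (R S : pzRingType) (f : {rmorphism R -> S}) n
    (X : 'M[R]_n) (c : R) :
  map_mx f (skew_block X c) = skew_block (map_mx f X) (f c).
Proof. by rewrite map_block_mx map_mxN map_scalar_mx. Qed.

Definition shift_prod (K : fieldType) n (a : K) (B H : 'M[K]_n) : 'M[K]_n :=
  (2 * a)^-1 *: ((a%:M + B) *m (a%:M + H)).

Lemma shift_prod_subD (K : fieldType) n (a : K) (B H : 'M[K]_n) :
  a != 0 -> 2 != 0 :> K -> shift_prod a B H - (B + H) = shift_prod a (- B) (- H).
Proof.
move=> a0 two0.
have expand (s : K) : (a%:M + s *: B) *m (a%:M + s *: H) =
    (a *: a%:M + s ^+ 2 *: (B *m H)) + (s * a) *: (B + H).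
  rewrite mulmxDl !mulmxDr !mul_scalar_mx mul_mx_scalar -scalemxAl -scalemxAr.
  rewrite !scalerA scalerDr (mulrC s a) -expr2 -!addrA; congr (_ + _).
  by rewrite addrC addrA (addrC (_ *: B)).
rewrite /shift_prod; have := expand 1; have := expand (-1).
rewrite !scale1r !scaleN1r => -> ->; rewrite expr1n sqrrN expr1n mul1r mulN1r.
set S := B + H; clearbody S; rewrite !scalerDr -!addrA; congr (_ + _); congr (_ + _).
by rewrite !scalerA -[X in _ - X]scale1r -scalerBl; congr (_ *: _); field; rewrite a0.
Qed.

Lemma map_shift_prod (K L : fieldType) (f : {rmorphism K -> L}) n (a : K)
    (B H : 'M[K]_n) :
  map_mx f (shift_prod a B H) = shift_prod (f a) (map_mx f B) (map_mx f H).
Proof.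
by rewrite /shift_prod map_mxZ map_mxM !map_mxD !map_scalar_mx fmorphV rmorphM rmorph_nat.
Qed.

Section DotProduct.
Variable C : numClosedFieldType.
Local Notation "''[' u , v ]" := (dotmx u v) : ring_scope.
Local Notation "''[' u ]" := (dotmx u u) : ring_scope.

Lemma dotmx_sum n (u : 'rV[C]_n) : '[u] = \sum_j `|u 0 j| ^+ 2.
Proof. by rewrite dotmxE mxE; apply: eq_bigr => j _; rewrite !mxE normCK. Qed.

Lemma dotmx_row_mx n1 n2 (u1 : 'rV[C]_n1) (u2 : 'rV[C]_n2) :
  '[row_mx u1 u2] = '[u1] + '[u2].
Proof.
by rewrite !dotmx_sum big_split_ord /=; congr (_ + _); apply: eq_bigr => j _;
  rewrite ?row_mxEl ?row_mxEr.
Qed.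

Lemma dotmx_diag n (u d : 'rV[C]_n) :
  '[u *m diag_mx d] = \sum_j `|u 0 j| ^+ 2 * `|d 0 j| ^+ 2.
Proof.
by rewrite dotmx_sum; apply: eq_bigr => j _; rewrite mul_mx_diag mxE normrM exprMn.
Qed.

Lemma dotmx_unitary m n (U : 'M[C]_(m, n)) (u : 'rV[C]_m) :
  U \is unitarymx -> '[u *m U] = '[u].
Proof.
by move=> /unitarymxP hU; rewrite !dotmxE trmx_mul map_mxM mulmxA -(mulmxA u) hU mulmx1.
Qed.

Lemma dotmx_mulmx_herm n (X : 'M[C]_n) (u v : 'rV[C]_n) :
  X ^t* = X -> '[u *m X, v] = '[u, v *m X].
Proof. by move=> hX; rewrite !dotmxE trmx_mul map_mxM hX mulmxA. Qed.

Lemma herm_eigenvalue_real n (X : 'M[C]_n) l :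
  X ^t* = X -> eigenvalue X l -> l \is Num.real.
Proof.
move=> hX /eigenvalueP [v hv v0].
have : l * '[v] = l^* * '[v].
  by rewrite -linearZl_LR /= -hv dotmx_mulmx_herm // hv linearZr_LR.
by move/(mulIf _); rewrite dnorm_eq0 => /(_ v0) /esym /CrealP.
Qed.

Lemma normalmx_spectralE n (X : 'M[C]_n) :
  X \is normalmx -> X = (spectralmx X)^t* *m diag_mx (spectral_diag X) *m spectralmx X.
Proof.
by move=> /orthomx_spectralP {1}->; rewrite invmx_unitary // spectral_unitarymx.
Qed.

Lemma eigenvalue_normal n (X : 'M[C]_n) l : X \is normalmx ->
  eigenvalue X l = (l \in codom (spectral_diag X 0)).
Proof.
move=> /orthomx_spectralP {1}->; rewrite eigenvalue_uconj ?spectral_unit //.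
exact: eigenvalue_diag_mx.
Qed.

Lemma dotmx_shift_normal n (X : 'M[C]_n) (a b t : C) (u : 'rV[C]_n) :
  X \is normalmx ->
  '[u *m (a%:M + b *: X)] + t * '[u] =
  \sum_j `|(u *m (spectralmx X)^t*) 0 j| ^+ 2 *
         (`|a + b * spectral_diag X 0 j| ^+ 2 + t).
Proof.
move=> /normalmx_spectralE XE.
have PU := spectral_unitarymx X.
set P := spectralmx X in XE PU *; set s := spectral_diag X in XE *.
set x := u *m P^t*.
have uE : u = x *m P by rewrite /x mulmxKtV.
clearbody x.
have shiftE : a%:M + b *: X = P^t* *m diag_mx (const_mx a + b *: s) *m P.
  rewrite linearD linearZ /= diag_const_mx mulmxDr mulmxDl XE.
  have PhP : P^t* *m P = 1%:M by rewrite -(invmx_unitary PU) mulVmx ?unitarymx_unit.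
  by rewrite mul_mx_scalar -scalemxAl PhP scalemx1 -scalemxAr -scalemxAl.
have -> : u *m (a%:M + b *: X) = x *m diag_mx (const_mx a + b *: s) *m P.
  by rewrite shiftE uE !mulmxA mulmxtVK.
rewrite dotmx_unitary // dotmx_diag uE dotmx_unitary // dotmx_sum.
rewrite mulr_sumr -big_split; apply: eq_bigr => j _ /=.
by rewrite !mxE; ring.
Qed.

Lemma herm_normalmx n (X : 'M[C]_n) : X ^t* = X -> X \is normalmx.
Proof. by move=> hX; apply/normalmxP; rewrite hX. Qed.

Lemma herm_shift n (X : 'M[C]_n) (a : C) :
  X ^t* = X -> a^* = a -> (a%:M + X) ^t* = a%:M + X.
Proof.
by move=> hX ha; rewrite linearD /= map_mxD hX tr_scalar_mx map_scalar_mx /= ha.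
Qed.

Lemma dotmx_shift_normal_le n (X : 'M[C]_n) (a t k : C) (u : 'rV[C]_n) :
  X \is normalmx -> 0 <= k ->
  (forall l, eigenvalue X l -> `|a - l| ^+ 2 + t <= k * (`|a + l| ^+ 2 + t)) ->
  '[u *m (a%:M - X)] + t * '[u] <= k * ('[u *m (a%:M + X)] + t * '[u]).
Proof.
move=> nX k0 hX.
have := dotmx_shift_normal a (-1) t u nX; have := dotmx_shift_normal a 1 t u nX.
rewrite scaleN1r scale1r => -> ->; rewrite mulr_sumr.
apply: ler_sum => j _; rewrite mulrCA ler_wpM2l ?exprn_ge0 //.
by rewrite mulN1r mul1r hX // eigenvalue_normal // codom_f.
Qed.

Lemma dotmx_shift_normal_gt0 n (X : 'M[C]_n) (a t : C) (u : 'rV[C]_n) :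
  X \is normalmx -> (forall l, eigenvalue X l -> 0 < `|a + l| ^+ 2 + t) ->
  u != 0 -> 0 < '[u *m (a%:M + X)] + t * '[u].
Proof.
move=> nX hX u0; rewrite -[X in a%:M + X]scale1r dotmx_shift_normal //.
set x := u *m _.
have q_gt0 j : 0 < `|a + 1 * spectral_diag X 0 j| ^+ 2 + t.
  by rewrite mul1r hX // eigenvalue_normal // codom_f.
have term_ge0 j : 0 <= `|x 0 j| ^+ 2 * (`|a + 1 * spectral_diag X 0 j| ^+ 2 + t).
  exact: mulr_ge0 (exprn_ge0 _ (normr_ge0 _)) (ltW (q_gt0 j)).
rewrite lt_def sumr_ge0 ?andbT //; apply: contra u0 => /eqP /psumr_eq0P x0.
rewrite -[u](mulmxKtV u (spectral_unitarymx X)) // -/x.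
suff -> : x = 0 by rewrite mul0mx.
apply/rowP => j; rewrite [RHS]mxE; apply/eqP.
have /eqP := x0 (fun j _ => term_ge0 j) j isT.
by rewrite mulf_eq0 (gt_eqF (q_gt0 j)) orbF sqrf_eq0 normr_eq0.
Qed.

Lemma dotmx_skew_block n (X : 'M[C]_n) (c : C) (u1 u2 : 'rV[C]_n) :
  X ^t* = X -> c^* = c ->
  '[row_mx u1 u2 *m skew_block X c] =
  ('[u1 *m X] + `|c| ^+ 2 * '[u1]) + ('[u2 *m X] + `|c| ^+ 2 * '[u2]).
Proof.
move=> hX hc; rewrite mul_row_block mulmxN !mul_mx_scalar dotmx_row_mx !dnormD.
rewrite -scaleNr !dnormZ normrN linearZr_LR linearZl_LR /= hc.
by rewrite (dotmx_mulmx_herm u1 u2 hX) mulNr rmorphN; ring.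
Qed.

Lemma dotmx_shift_skew_block_le n (X : 'M[C]_n) (a c k : C) (h : 'rV[C]_(n + n)) :
  X ^t* = X -> a^* = a -> c^* = c -> 0 <= k ->
  (forall l, eigenvalue X l ->
     `|a - l| ^+ 2 + `|c| ^+ 2 <= k * (`|a + l| ^+ 2 + `|c| ^+ 2)) ->
  '[h *m (a%:M - skew_block X c)] <= k * '[h *m (a%:M + skew_block X c)].
Proof.
move=> hX ha hc k0 hl; rewrite -(hsubmxK h) opp_skew_block !add_scalar_skew_block.
have hXN : (- X) ^t* = - X by rewrite raddfN /= map_mxN hX.
have hcN : (- c)^* = - c by rewrite rmorphN; congr (- _); exact: hc.
rewrite !dotmx_skew_block ?herm_shift // normrN mulrDr.
by apply: lerD; apply: dotmx_shift_normal_le => //; apply: herm_normalmx.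
Qed.

Lemma shift_skew_block_unit n (X : 'M[C]_n) (a c : C) :
  X ^t* = X -> a^* = a -> c^* = c ->
  (forall l, eigenvalue X l -> 0 < `|a + l| ^+ 2 + `|c| ^+ 2) ->
  a%:M + skew_block X c \in unitmx.
Proof.
move=> hX ha hc hl; rewrite unitmxE unitfE; apply/det0P => -[h h0].
have part_eq0 u : '[u *m (a%:M + X)] + `|c| ^+ 2 * '[u] = 0 -> u = 0.
  move=> e; apply/eqP/negP => /negP u0.
  by have := dotmx_shift_normal_gt0 (herm_normalmx hX) hl u0; rewrite e ltxx.
rewrite -(hsubmxK h) add_scalar_skew_block => /(congr1 (fun v => '[v])).
rewrite dotmx_skew_block ?herm_shift // linear0l => /eqP.
rewrite paddr_eq0 ?addr_ge0 ?mulr_ge0 ?dnorm_ge0 //.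
move=> /andP[/eqP/part_eq0 h10 /eqP/part_eq0 h20].
by move: h0; rewrite -(hsubmxK h) h10 h20 row_mx0 eqxx.
Qed.

Section ShiftedFactors.
Variables (n : nat) (B H : 'M[C]_n) (w al be : C).
Hypotheses (WBu : w%:M + B \in unitmx) (WHu : w%:M + H \in unitmx) (be_ge0 : 0 <= be).
Hypothesis B_contr : forall u, '[u *m (w%:M - B)] <= al * '[u *m (w%:M + B)].
Hypothesis H_contr : forall h, '[h *m (w%:M - H)] <= be * '[h *m (w%:M + H)].

Lemma shifted_factors_bound (u : 'rV[C]_n) (lam : C) : u != 0 ->
  u *m (w%:M - B) *m (w%:M - H) = lam *: (u *m (w%:M + B) *m (w%:M + H)) ->
  `|lam| ^+ 2 <= al * be.
Proof.
move=> u0 hu; set y := u *m (w%:M + B); set g := u *m (w%:M - B) in hu.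
set h := g *m invmx (w%:M + H).
have gE : h *m (w%:M + H) = g by rewrite mulmxKV.
have shift_comm : comm_mx (w%:M - H) (w%:M + H).
  apply: comm_mxD; first exact: comm_mx_scalar.
  by apply/comm_mx_sym/comm_mxB; [exact: comm_mx_scalar | exact: comm_mx_refl].
have hy : h *m (w%:M - H) = lam *: y.
  apply: (row_free_inj (_ : row_free (w%:M + H))); first by rewrite row_free_unit.
  by rewrite -mulmxA shift_comm mulmxA gE hu scalemxAl.
have y0 : y != 0 by rewrite mulmx_free_eq0 ?row_free_unit.
have : `|lam| ^+ 2 * '[y] <= al * be * '[y].
  rewrite -dnormZ -hy (le_trans (H_contr h)) // gE -mulrA mulrCA.
  by rewrite ler_wpM2l // B_contr.
by rewrite ler_pM2r ?dnorm_gt0.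
Qed.

Lemma shift_prod_eigenvalue_bound (z : C) : w != 0 ->
  eigenvalue (invmx (shift_prod w B H) *m (B + H)) z -> `|1 - z| ^+ 2 <= al * be.
Proof.
move=> w0 /eigenvalueP [v hv v0].
have two_w0 : 2 * w != 0 by rewrite mulf_neq0 ?pnatr_eq0.
have Fu : shift_prod w B H \in unitmx.
  by rewrite unitmxZ ?unitmx_mul ?WBu ?WHu // unitfE invr_eq0.
set u := v *m invmx (shift_prod w B H).
have vE : v = u *m shift_prod w B H by rewrite mulmxKV.
have hu : u *m (shift_prod w B H - (B + H)) = (1 - z) *: (u *m shift_prod w B H).
  by rewrite mulmxBr -[u *m (B + H)]mulmxA hv -vE scalerBl scale1r.
apply: (shifted_factors_bound (u := u)).
  by apply: contraNneq v0 => u0; rewrite vE u0 mul0mx.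
apply: (scalerI (_ : (2 * w)^-1 != 0)); first by rewrite invr_eq0.
move: hu; rewrite shift_prod_subD ?pnatr_eq0 // /shift_prod -!scalemxAr !mulmxA => ->.
by rewrite !scalerA mulrC.
Qed.

End ShiftedFactors.
End DotProduct.

Section RealSup.
Variable R : realType.
Local Open Scope classical_set_scope.

Lemma sup_ge0_le (S : set R) (K : R) : 0 <= K ->
  (forall x, S x -> 0 <= x <= K) -> 0 <= sup S <= K.
Proof.
move=> K0 hS; have [[x Sx]|S0] := pselect (S !=set0); last first.
  by rewrite (_ : S = set0) ?sup0 ?lexx // -subset0 => x Sx; apply: S0; exists x.
have ub : has_ubound S by exists K => y /hS /andP[].
apply/andP; split; last by apply: ge_sup; [exists x | move=> y /hS /andP[]].
by apply: le_trans (ub_le_sup ub Sx); case/andP: (hS _ Sx).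
Qed.

Lemma sup_lt_finite (S : set R) n (r : 'I_n -> R) (K : R) : 0 < K ->
  S `<=` range r -> (forall x, S x -> x < K) -> sup S < K.
Proof.
move=> K0 Sr SK; set c := \big[Num.max/0]_(j | `[< S (r j) >]) r j.
apply: le_lt_trans (_ : sup S <= c) _; last first.
  by apply: bigmax_lt => // j /asboolP /SK.
have [[x Sx]|S0] := pselect (S !=set0); last first.
  rewrite (_ : S = set0) ?sup0; last by rewrite -subset0 => x Sx; apply: S0; exists x.
  exact: bigmax_ge_id.
apply: ge_sup; first by exists x.
move=> _ /[dup] /Sr [j _ <-] Srj; exact/le_bigmax_cond/asboolP.
Qed.

End RealSup.

Section ComplexOfReal.
Variable R : realType.
Local Notation "''[' u ]" := (dotmx u u) : ring_scope.
Local Notation cmx A := (map_mx (real_complex R) A).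

Lemma conj_real_complex (x : R) : (x%:C%C)^* = x%:C%C.
Proof. exact: conjc_real. Qed.

Lemma normC_real_sqr (x : R) : `|x%:C%C| ^+ 2 = (x ^+ 2)%:C%C.
Proof. by rewrite real_normK ?rmorphXn //; apply/complex_realP; exists x. Qed.

Lemma sym_map_herm n (Y : 'M[R]_n) : Y^T = Y -> (cmx Y) ^t* = cmx Y.
Proof.
move=> hY; apply/matrixP => i j; rewrite !mxE -[in RHS]hY mxE.
exact: conj_real_complex.
Qed.

Lemma eigenvalue_map_sym n (Y : 'M[R]_n) l : Y^T = Y ->
  eigenvalue (cmx Y) l -> exists2 m, l = m%:C%C & eigenvalue Y m.
Proof.
move=> hY el; have /RRe_real lE := herm_eigenvalue_real (sym_map_herm hY) el.
exists (complex.Re l); first exact: esym lE.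
by rewrite -(eigenvalue_map (real_complex R)); move: el; rewrite -{1}lE.
Qed.

Lemma map_shift_skew_block_le n (Y : 'M[R]_n) (w c k : R) (h : 'rV[R[i]]_(n + n)) :
  Y^T = Y -> 0 <= k ->
  (forall m, eigenvalue Y m -> (w - m) ^+ 2 + c ^+ 2 <= k * ((w + m) ^+ 2 + c ^+ 2)) ->
  '[h *m ((w%:C%C)%:M - cmx (skew_block Y c))] <=
    k%:C%C * '[h *m ((w%:C%C)%:M + cmx (skew_block Y c))].
Proof.
move=> hY k0 hk; rewrite map_skew_block.
apply: dotmx_shift_skew_block_le; rewrite ?sym_map_herm ?conj_real_complex ?lecR //.
move=> _ /(eigenvalue_map_sym hY) [m -> /hk].
by rewrite -rmorphB -rmorphD !normC_real_sqr -!rmorphD -rmorphM lecR.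
Qed.

Lemma map_shift_skew_block_unit n (Y : 'M[R]_n) (w c : R) : Y^T = Y ->
  (forall m, eigenvalue Y m -> 0 < (w + m) ^+ 2 + c ^+ 2) ->
  (w%:C%C)%:M + cmx (skew_block Y c) \in unitmx.
Proof.
move=> hY hc; rewrite map_skew_block.
apply: shift_skew_block_unit; rewrite ?sym_map_herm ?conj_real_complex //.
move=> _ /(eigenvalue_map_sym hY) [m -> /hc].
by rewrite -rmorphD !normC_real_sqr -rmorphD ltcR.
Qed.

End ComplexOfReal.

Section ModelMatrices.
Variable R : realType.
Local Open Scope classical_set_scope.
Local Notation "''[' u ]" := (dotmx u u) : ring_scope.
Local Notation cmx A := (map_mx (real_complex R) A).

Definition sigmaD M (w : R) (D : 'M[R]_M) :=
  sup [set `|(w + l) / (w - l)| | l in spec D].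
Definition sigmaT M (w : R) (T : 'M[R]_M) :=
  sup [set Num.sqrt (((w - m) ^+ 2 + 1) / ((w + m) ^+ 2 + 1)) | m in spec T].

Lemma sigmaE M (w : R) (T D : 'M[R]_M) : sigma w T D = sigmaD w D * sigmaT w T.
Proof. by []. Qed.

Lemma cayley_ratio_ge0_le1 (w l : R) : 0 < w -> l <= 0 -> 0 <= `|(w + l) / (w - l)| <= 1.
Proof. by move=> w0 l0; rewrite normr_ge0 ler_norml ler_pdivrMr ?ler_pdivlMr; lra. Qed.

Lemma cayley_ratio_sqr_le (w l a : R) : 0 < w -> l <= 0 ->
  `|(w + l) / (w - l)| <= a -> (w + l) ^+ 2 <= a ^+ 2 * (w - l) ^+ 2.
Proof.
move=> w0 l0; have wl : 0 < w - l by lra.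
rewrite normrM normfV (gtr0_norm wl) ler_pdivrMr // => hl.
rewrite -exprMn -real_normK ?num_real // ler_sqr ?nnegrE ?normr_ge0 //.
exact: le_trans (normr_ge0 _) hl.
Qed.

Lemma sqrt_ratio_lt1 (w m : R) : 0 < w -> 0 < m ->
  Num.sqrt (((w - m) ^+ 2 + 1) / ((w + m) ^+ 2 + 1)) < 1.
Proof.
move=> w0 m0; rewrite -[X in _ < X]sqrtr1 ltr_sqrt ?ltr01 // ltr_pdivrMr ?ltr_pwDr ?sqr_ge0 //.
by rewrite mul1r ltrD2r; nra.
Qed.

Lemma spd_eigenvalue_gt0 n (T : 'M[R]_n) m : spd T -> eigenvalue T m -> 0 < m.
Proof.
move=> [_ hT] /eigenvalueP [v hv v0].
have : v^T != 0 by apply: contra v0 => /eqP /(congr1 trmx); rewrite trmxK trmx0 => ->.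
move/hT; rewrite trmxK hv -scalemxAl mxE.
have vv_ge0 : 0 <= (v *m v^T) 0 0.
  by rewrite mxE; apply: sumr_ge0 => j _; rewrite mxE -expr2 sqr_ge0.
by apply: contraTT; rewrite -!leNgt => m_le0; exact: mulr_le0_ge0.
Qed.

Section CayleyFactor.
Variables (n : nat) (dd : 'rV[R]_n) (w : R).
Hypotheses (w_gt0 : 0 < w) (dd_le0 : forall j, dd 0 j <= 0).

Lemma cayley_spec_diag_in01 x :
  [set `|(w + l) / (w - l)| | l in spec (diag_mx dd)] x -> 0 <= x <= 1.
Proof.
by case=> l; rewrite /spec /= eigenvalue_diag_mx => /codomP [j ->] <-;
  apply: cayley_ratio_ge0_le1.
Qed.

Lemma sigmaD_ge0_le1 : 0 <= sigmaD w (diag_mx dd) <= 1.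
Proof. exact: sup_ge0_le ler01 cayley_spec_diag_in01. Qed.

Lemma cayley_le_sigmaD j : `|(w + dd 0 j) / (w - dd 0 j)| <= sigmaD w (diag_mx dd).
Proof.
apply: ub_le_sup; first by exists 1 => x /cayley_spec_diag_in01 /andP[].
by exists (dd 0 j); rewrite // /spec /= eigenvalue_diag_mx codom_f.
Qed.

End CayleyFactor.

Section RatioFactor.
Variables (n : nat) (T : 'M[R]_n) (w : R).
Hypotheses (T_spd : spd T) (w_gt0 : 0 < w).

Lemma ratio_spec_spd_in01 x :
  [set Num.sqrt (((w - m) ^+ 2 + 1) / ((w + m) ^+ 2 + 1)) | m in spec T] x ->
  0 <= x < 1.
Proof.
case=> m /(spd_eigenvalue_gt0 T_spd) m_gt0 <-.
by rewrite sqrtr_ge0 sqrt_ratio_lt1.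
Qed.

Lemma sigmaT_ge0_lt1 : 0 <= sigmaT w T < 1.
Proof.
rewrite /sigmaT; set S := (X in sup X).
have S01 x : S x -> 0 <= x <= 1 by move/ratio_spec_spd_in01 => /andP[-> /ltW].
have /andP[-> _] := sup_ge0_le ler01 S01.
(* lambda(T) is finite: it consists of real parts of the spectral diagonal of T over C *)
pose re j := complex.Re (spectral_diag (cmx T) 0 j).
apply: (sup_lt_finite (r := fun j =>
    Num.sqrt (((w - re j) ^+ 2 + 1) / ((w + re j) ^+ 2 + 1)))) => //; last first.
  by move=> x /ratio_spec_spd_in01 /andP[].
move=> _ [m Tm <-].
have : eigenvalue (cmx T) m%:C%C by rewrite eigenvalue_map.
rewrite eigenvalue_normal ?herm_normalmx ?sym_map_herm //; last by case: T_spd.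
by case/codomP => j /(congr1 (@complex.Re R)) /= ->; exists j.
Qed.

Lemma ratio_le_sigmaT m : eigenvalue T m ->
  (w - m) ^+ 2 + 1 <= sigmaT w T ^+ 2 * ((w + m) ^+ 2 + 1).
Proof.
move=> Tm; have q_ge0 : 0 <= ((w - m) ^+ 2 + 1) / ((w + m) ^+ 2 + 1).
  by rewrite divr_ge0 ?addr_ge0 ?sqr_ge0.
have sqrt_le : Num.sqrt (((w - m) ^+ 2 + 1) / ((w + m) ^+ 2 + 1)) <= sigmaT w T.
  apply: ub_le_sup; last by exists m.
  by exists 1 => x /ratio_spec_spd_in01 /andP[_ /ltW].
have /andP[b_ge0 _] := sigmaT_ge0_lt1.
rewrite -ler_pdivrMr ?ltr_pwDr ?sqr_ge0 // -(sqr_sqrtr q_ge0).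
by rewrite ler_sqr ?nnegrE ?sqrtr_ge0.
Qed.

End RatioFactor.

Lemma Bmx_skew M (D : 'M[R]_M) : Bmx D = skew_block (- D) 0.
Proof. by rewrite /Bmx /skew_block raddf0 oppr0. Qed.

Lemma Hmx_skew M (T : 'M[R]_M) : Hmx T = skew_block T 1.
Proof. by []. Qed.

Lemma Fmx_shift_prod M (w : R) (T D : 'M[R]_M) :
  Fmx w T D = shift_prod w (Bmx D) (Hmx T).
Proof. by []. Qed.

Lemma Rmx_BH M (T D : 'M[R]_M) : Rmx T D = Bmx D + Hmx T.
Proof. by rewrite /Rmx /Bmx /Hmx add_block_mx sub0r add0r (addrC (- D)). Qed.

Lemma eigenvalue_opp_diag n (dd : 'rV[R]_n) m :
  eigenvalue (- diag_mx dd) m -> exists j, m = - dd 0 j.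
Proof.
by rewrite -linearN eigenvalue_diag_mx => /codomP [j ->]; exists j; rewrite mxE.
Qed.

Lemma opp_diag_sym n (dd : 'rV[R]_n) : (- diag_mx dd)^T = - diag_mx dd.
Proof. by rewrite linearN /= tr_diag_mx. Qed.

Section ShiftedBH.
Variable (w : R).
Hypothesis w_gt0 : 0 < w.

Lemma Bmx_shift_unit n (dd : 'rV[R]_n) : (forall j, dd 0 j <= 0) ->
  (w%:C%C)%:M + cmx (Bmx (diag_mx dd)) \in unitmx.
Proof.
move=> dd_le0; rewrite Bmx_skew; apply: map_shift_skew_block_unit (opp_diag_sym dd) _.
move=> _ /eigenvalue_opp_diag [j ->].
by rewrite expr0n addr0 exprn_gt0 // subr_gt0 (le_lt_trans (dd_le0 j)).
Qed.

Lemma Bmx_shift_le n (dd : 'rV[R]_n) (a : R) :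
  (forall j, dd 0 j <= 0) -> (forall j, `|(w + dd 0 j) / (w - dd 0 j)| <= a) ->
  forall u : 'rV[R[i]]_(n + n), '[u *m ((w%:C%C)%:M - cmx (Bmx (diag_mx dd)))] <=
    (a ^+ 2)%:C%C * '[u *m ((w%:C%C)%:M + cmx (Bmx (diag_mx dd)))].
Proof.
move=> dd_le0 dd_cayley u; rewrite Bmx_skew.
apply: map_shift_skew_block_le (opp_diag_sym dd) (sqr_ge0 a) _.
move=> _ /eigenvalue_opp_diag [j ->]; rewrite expr0n !addr0 opprK.
exact: cayley_ratio_sqr_le.
Qed.

Lemma Hmx_shift_unit n (T : 'M[R]_n) : T^T = T ->
  (w%:C%C)%:M + cmx (Hmx T) \in unitmx.
Proof.
move=> T_sym; rewrite Hmx_skew; apply: map_shift_skew_block_unit T_sym _ => m _.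
by rewrite ltr_wpDl ?sqr_ge0 // expr1n.
Qed.

Lemma Hmx_shift_le n (T : 'M[R]_n) (b : R) : T^T = T ->
  (forall m, eigenvalue T m -> (w - m) ^+ 2 + 1 <= b ^+ 2 * ((w + m) ^+ 2 + 1)) ->
  forall h : 'rV[R[i]]_(n + n), '[h *m ((w%:C%C)%:M - cmx (Hmx T))] <=
    (b ^+ 2)%:C%C * '[h *m ((w%:C%C)%:M + cmx (Hmx T))].
Proof.
move=> T_sym T_ratio h; rewrite Hmx_skew.
by apply: map_shift_skew_block_le T_sym (sqr_ge0 b) _ => m; rewrite expr1n; apply: T_ratio.
Qed.

End ShiftedBH.

End ModelMatrices.

Theorem theorem3 (R : realType) (M : nat) (T D : 'M[R]_M) (w : R) :
  spd T -> is_diag_mx D -> (forall i, D i i <= 0) -> 0 < w ->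
  (forall z : R[i],
     eigenvalue (map_mx (@toC R) (invmx (Fmx w T D) *m Rmx T D)) z ->
     `|z - 1| <= ((sigma w T D)%:C)%C)
  /\ sigma w T D < 1.
Proof.
move=> T_spd /diag_mxP [dd ->] D_le0 w_gt0.
have dd_le0 j : dd 0 j <= 0 by have := D_le0 j; rewrite mxE eqxx mulr1n.
have T_sym : T^T = T by case: T_spd.
have /andP[a_ge0 a_le1] := sigmaD_ge0_le1 w_gt0 dd_le0.
have /andP[b_ge0 b_lt1] := sigmaT_ge0_lt1 T_spd w_gt0.
rewrite sigmaE; split => [z|]; last by nra.
rewrite (_ : @toC R = real_complex R) // map_mxM map_invmx.
rewrite Fmx_shift_prod map_shift_prod Rmx_BH map_mxD.
have be_ge0 : 0 <= (sigmaT w T ^+ 2)%:C%C by rewrite lecR sqr_ge0.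
have w_neq0 : w%:C%C != 0 by rewrite fmorph_eq0 gt_eqF.
move=> ez; have := shift_prod_eigenvalue_bound (Bmx_shift_unit w_gt0 dd_le0)
  (Hmx_shift_unit _ T_sym) be_ge0 (Bmx_shift_le w_gt0 dd_le0 (cayley_le_sigmaD w_gt0 dd_le0))
  (Hmx_shift_le T_sym (ratio_le_sigmaT T_spd w_gt0)) w_neq0 ez.
rewrite -rmorphM -exprMn distrC rmorphXn => hz.
by rewrite -ler_sqr ?nnegrE ?normr_ge0 ?lecR ?mulr_ge0.
Qed.
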